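(* Let $\{(G_n,\Psi_n,\varphi^L_n,\varphi^U_n)\}_{n\ge0}$ be an $\mathcal{F}$-system (with $\varphi^U_n>0$) satisfying Condition $\Gamma$, with induced Cantor system $(X,H_X)$, and assume its associated fence $\mathbf{F}_\Phi$ is a Scissorhand fence. Then there exists a unique continuous surjection $T:\mathbf{F}_\Phi\to\mathbf{F}_\Phi$ having $H_X$ as a factor (i.e. $\pi\circ T=H_X\circ\pi$, where $\pi(x,t)=x$) and satisfying $T(x,\varphi^U(x))=(H_X(x),\varphi^U(H_X(x)))$ for all $x\in X$. Moreover: (1) if $H_X$ is a homeomorphism, then $T$ is a homeomorphism of $\mathbf{F}_\Phi$; (2) if $s$ and $H_X$ are both Lipschitz, then so is $T$; (3) if $s$ and $1/s$ are both Lipschitz and $H_X$ is bi-Lipschitz, then $T$ is bi-Lipschitz; (4) if $s\equiv1$ and $H_X$ is an isometry, then $T$ is an isometry.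
   Context: An $\mathcal{F}$-system consists of: finite directed graphs $G_n$ ($n\ge0$), each vertex having at least one outgoing and one incoming edge; surjective maps $\Psi_n:G_{n+1}\to G_n$ sending edges to edges; such that (i) for each $n$ and $v\in G_n$ there are $m>n$ and distinct $v',v''\in G_{m+1}$ with $\Psi_n\circ\cdots\circ\Psi_m(v')=\Psi_n\circ\cdots\circ\Psi_m(v'')=v$; (ii) for every $m$ there is $n>m$ such that for every $g\in G_n$ the set $\{\Psi_m\circ\cdots\circ\Psi_{n-1}(g'):\overrightarrow{gg'}\in G_n\}$ has exactly one element; and maps $\varphi^L_n,\varphi^U_n:G_n\to[0,1]$ with $\varphi^L_n\le\varphi^U_n$, $\varphi^U_{n+1}(v')\le\varphi^U_n(\Psi_n(v'))$, $\varphi^L_{n+1}(v')\ge\varphi^L_n(\Psi_n(v'))$, and such that for every $g\in G_n$ there is $g'\in G_{n+1}$ with $\Psi_n(g')=g$, $\varphi^L_{n+1}(g')=\varphi^L_n(g)$, $\varphi^U_{n+1}(g')=\varphi^U_n(g)$. $X=\{x\in\prod_n G_n: x(n)=\Psi_n(x(n+1))\ \forall n\}$ with metric $d(x,y)=2^{-n}$, $n$ the least index with $x(n)\ne y(n)$; $H_X:X\to X$ is the continuous surjection whose graph is $\{(x,y)\in X^2:\overrightarrow{x(n)y(n)}\in G_n\ \forall n\}$. $\varphi^U(x)=\lim_n\varphi^U_n(x(n))$, $\varphi^L(x)=\lim_n\varphi^L_n(x(n))$, $\Phi=(\varphi^L,\varphi^U)$ and $\mathbf{F}_\Phi=\{(x,t)\in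 X\times[0,1]:\varphi^L(x)\le t\le\varphi^U(x)\}$, with the maximum metric of $X\times[0,1]$. It is a Scissorhand fence if the graph of $\varphi^U$ is dense in $\mathbf{F}_\Phi$ and $\{x:\varphi^L(x)\ne\varphi^U(x)\}$ is dense in $X$. For $u,v\in G_n$, $s_n(u,v)=\varphi^U_n(v)/\varphi^U_n(u)$; for an edge $\overrightarrow{uv}\in G_n$, $\Gamma_n(\overrightarrow{uv})=\max\{|s_n(v,u)-s_{n+1}(v',u')|,|s_n(u,v)-s_{n+1}(u',v')| : \overrightarrow{u'v'}\in G_{n+1},\Psi_n(u')=u,\Psi_n(v')=v\}$, $\Gamma_n=\max\Gamma_n(\overrightarrow{uv})$; Condition $\Gamma$: $\sum_n\Gamma_n<1$. Finally $s:X\to\mathbb{R}$, $s(x)=\lim_n s_n(x(n),H_X(x)(n))$. *)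

From Stdlib Require Import Reals ClassicalEpsilon.
From mathcomp Require Import all_boot.


Local Open Scope R_scope.

Record FData := {
  V : nat -> finType;
  E : forall n, rel (V n);
  Psi : forall n, V n.+1 -> V n;
  phiL : forall n, V n -> R;
  phiU : forall n, V n -> R }.

Section FSys.
Variable Fs : FData.

Fixpoint proj (n d : nat) : V Fs (Nat.add d n) -> V Fs n :=
  match d return V Fs (Nat.add d n) -> V Fs n with
  | O => fun x => x
  | S d' => fun x => proj n d' (Psi Fs (Nat.add d' n) x)
  end.

Definition is_FSystem : Prop :=
  (forall n (v : V Fs n), exists w, E Fs n v w) /\
  (forall n (v : V Fs n), exists u, E Fs n u v) /\
  (forall n (v : V Fs n), exists v', Psi Fs n v' = v) /\
  (forall n (u v : V Fs n.+1), E Fs n.+1 u v -> E Fs n (Psi Fs n u) (Psi Fs n v)) /\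
  (forall n (u v : V Fs n), E Fs n u v ->
      exists u' v', [/\ E Fs n.+1 u' v', Psi Fs n u' = u & Psi Fs n v' = v]) /\
  (* condition (i): m > n, i.e. G_{m+1} = G_{n+d} with d = m+1-n >= 2 *)
  (forall n (v : V Fs n), exists d, (2 <= d)%nat /\
      exists v' v'' : V Fs (Nat.add d n), [/\ v' <> v'', proj n d v' = v & proj n d v'' = v]) /\
  (* condition (ii): n = m + d with d >= 1 *)
  (forall m, exists d, (1 <= d)%nat /\
      forall g : V Fs (Nat.add d m),
        exists! w : V Fs m, exists g', E Fs (Nat.add d m) g g' /\ proj m d g' = w) /\
  (forall n (v : V Fs n), 0 <= phiL Fs n v /\ phiL Fs n v <= phiU Fs n v /\ phiU Fs n v <= 1) /\
  (forall n (v : V Fs n.+1), phiU Fs n.+1 v <= phiU Fs n (Psi Fs n v)) /\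
  (forall n (v : V Fs n.+1), phiL Fs n (Psi Fs n v) <= phiL Fs n.+1 v) /\
  (forall n (g : V Fs n), exists g', [/\ Psi Fs n g' = g,
      phiL Fs n.+1 g' = phiL Fs n g & phiU Fs n.+1 g' = phiU Fs n g]).

Definition X : Type := {x : forall n, V Fs n | forall n, x n = Psi Fs n (x n.+1)}.

Definition pt (x : X) (n : nat) : V Fs n := proj1_sig x n.

Definition dX (x y : X) : R :=
  match excluded_middle_informative (exists n, pt x n != pt y n) with
  | left H => (/ 2) ^ (ex_minn H)
  | right _ => 0
  end.

Definition HXrel (x y : X) : Prop := forall n, E Fs n (pt x n) (pt y n).

Definition HX (x : X) : X :=
  match excluded_middle_informative (exists y, HXrel x y) with
  | left H => proj1_sig (constructive_indefinite_description _ H)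
  | right _ => x
  end.

(* limit of a real sequence (0 if it does not converge) *)
Definition lim_seq (u : nat -> R) : R :=
  match excluded_middle_informative (exists l, Un_cv u l) with
  | left H => proj1_sig (constructive_indefinite_description _ H)
  | right _ => 0
  end.

Definition phiUX (x : X) : R := lim_seq (fun n => phiU Fs n (pt x n)).
Definition phiLX (x : X) : R := lim_seq (fun n => phiL Fs n (pt x n)).

Definition sn (n : nat) (u v : V Fs n) : R := phiU Fs n v / phiU Fs n u.

Definition Gamma_edge (n : nat) (u v : V Fs n) : R :=
  \big[Rmax/0]_(p : V Fs n.+1 * V Fs n.+1 |
                  [&& E Fs n.+1 p.1 p.2, Psi Fs n p.1 == u & Psi Fs n p.2 == v])
     Rmax (Rabs (sn n v u - sn n.+1 p.2 p.1)) (Rabs (sn n u v - sn n.+1 p.1 p.2)).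

Definition Gamma (n : nat) : R :=
  \big[Rmax/0]_(p : V Fs n * V Fs n | E Fs n p.1 p.2) Gamma_edge n p.1 p.2.

Definition condition_Gamma : Prop :=
  exists l, infinite_sum Gamma l /\ l < 1.

Definition sX (x : X) : R := lim_seq (fun n => sn n (pt x n) (pt (HX x) n)).

Definition dXR (p q : X * R) : R := Rmax (dX p.1 q.1) (Rabs (p.2 - q.2)).

Definition Fence : Type := {p : X * R | phiLX p.1 <= p.2 <= phiUX p.1}.

Definition dF (p q : Fence) : R := dXR (proj1_sig p) (proj1_sig q).

Definition Scissorhand : Prop :=
  (forall (p : Fence) eps, 0 < eps ->
      exists x : X, dXR (proj1_sig p) (x, phiUX x) < eps) /\
  (forall (x : X) eps, 0 < eps -> exists y : X, dX x y < eps /\ phiLX y <> phiUX y).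

End FSys.

Section Metric.
Context {A B : Type}.
Variables (dA : A -> A -> R) (dB : B -> B -> R).

Definition mcontinuous (f : A -> B) : Prop :=
  forall a eps, 0 < eps -> exists delta, 0 < delta /\
    forall a', dA a a' < delta -> dB (f a) (f a') < eps.

Definition lipschitz (f : A -> B) : Prop :=
  exists K, forall a a', dB (f a) (f a') <= K * dA a a'.

Definition bilipschitz (f : A -> B) : Prop :=
  exists K, 0 < K /\ forall a a',
    dA a a' <= K * dB (f a) (f a') /\ dB (f a) (f a') <= K * dA a a'.

Definition isometry (f : A -> B) : Prop :=
  forall a a', dB (f a) (f a') = dA a a'.

End Metric.

Definition dR (x y : R) : R := Rabs (x - y).

Definition homeomorphism {A : Type} (dA : A -> A -> R) (f : A -> A) : Prop :=
  mcontinuous dA dA f /\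
  exists g : A -> A, [/\ (forall a, g (f a) = a), (forall a, f (g a) = a) &
                         mcontinuous dA dA g].

From Pilot Require Import Defs.
From Stdlib Require Import Reals Lra Classical ClassicalEpsilon.
From Stdlib Require Import FunctionalExtensionality ProofIrrelevance.
From mathcomp Require Import all_boot.

(* T(x, t) = (H_X x, s(x) t).  Condition Γ bounds the increments of
   n ↦ s_n(x(n), H_X(x)(n)) by the summable Γ_n, uniformly in x, so s is
   continuous and bounded away from 0 and ∞, and passing to the limit in
   φ^U_n(H_X(x)(n)) = s_n(x(n), H_X(x)(n)) φ^U_n(x(n)) gives φ^U ∘ H_X = s φ^U.
   Since φ^L is lower semicontinuous and the graph of φ^U is dense in the fence,
   approximating (x, φ^L x) by points of that graph gives
   φ^L(H_X x) ≤ s(x) φ^L(x), so T maps the fence into itself; when H_X has a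
   continuous inverse the reverse inequality follows in the same way, which
   makes (y, u) ↦ (H_X^-1 y, u / s(H_X^-1 y)) an inverse of T.  Surjectivity
   comes from the compactness of X (a cluster point of preimages of
   approximating graph points), uniqueness from the density of the graph, on
   which T is prescribed, and the metric statements are read off the formula
   for T. *)

Local Open Scope R_scope.

Lemma pow_half_pos n : 0 < (/2)^n.
Proof. apply: pow_lt; lra. Qed.

Lemma pow_half_le k m : (k <= m)%N -> (/2)^m <= (/2)^k.
Proof.
elim: m => [|m IH]; first by rewrite leqn0 => /eqP ->; lra.
rewrite leq_eqVlt => /orP [/eqP -> | /IH km]; first lra.
by have := pow_half_pos m; rewrite /=; lra.
Qed.
Arguments pow_half_le {k m}.

Lemma pow_half_lt eps : 0 < eps -> exists n, (/2)^n < eps.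
Proof.
move=> eps0; have [N HN] := pow_lt_1_zero (/2) ltac:(rewrite Rabs_pos_eq; lra) eps eps0.
by exists N; move: (HN N (le_n N)); rewrite Rabs_pos_eq //; apply: pow_le; lra.
Qed.

Lemma le_of_le_add_mul a b c : 0 <= c ->
  (forall e, 0 < e -> e <= 1 -> a <= b + e * c) -> a <= b.
Proof.
move=> c0 h; apply: Rle_plus_epsilon => eps eps0.
pose e := Rmin 1 (eps / (c + 1)).
have e1 : e <= 1 := Rmin_l _ _.
have e_le : e <= eps / (c + 1) := Rmin_r _ _.
have e0 : 0 < e by apply: Rmin_glb_lt; [lra | apply: Rdiv_lt_0_compat; lra].
have ec : e * c <= eps.
  have -> : eps = eps / (c + 1) * (c + 1) by field; lra.
  by apply: Rmult_le_compat; lra.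
by have := h e e0 e1; lra.
Qed.

Lemma Rabs_div_sub_lt a b t t' eps : 0 < a -> 0 < eps ->
  Rabs (a - b) < Rmin (a / 2) (eps * a * a / 4) -> Rabs (t - t') < eps * a / 2 ->
  0 <= t' <= 1 -> Rabs (t / a - t' / b) < eps.
Proof.
move=> a0 eps0 ab tt' t'01.
have ab1 := Rlt_le_trans _ _ _ ab (Rmin_l _ _).
have ab2 := Rlt_le_trans _ _ _ ab (Rmin_r _ _).
have b0 : a / 2 < b by move/Rabs_def2: ab1; lra.
have ab0 : 0 < a * b by apply: Rmult_lt_0_compat; lra.
apply: (Rmult_lt_reg_r (a * b)) => //.
rewrite -(Rabs_pos_eq (a * b)); last lra.
rewrite -Rabs_mult.
have -> : (t / a - t' / b) * (a * b) = (t - t') * b + t' * (b - a) by field; lra.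
apply: Rle_lt_trans (Rabs_triang _ _) _.
rewrite !Rabs_mult (Rabs_pos_eq b) ?(Rabs_pos_eq t') ?(Rabs_pos_eq a); try lra.
rewrite (Rabs_minus_sym b a).
have h1 : Rabs (t - t') * b < eps * a / 2 * b by apply: Rmult_lt_compat_r; lra.
have h2 : t' * Rabs (a - b) <= Rabs (a - b) by have := Rabs_pos (a - b); nra.
have ea : 0 < eps * a by apply: Rmult_lt_0_compat.
have h3 : eps * a * a / 4 < eps * a * b / 2 by nra.
lra.
Qed.

Lemma Rabs_le_inv x a : Rabs x <= a -> - a <= x <= a.
Proof. by move=> h; split; [have := Rle_abs (- x); rewrite Rabs_Ropp | have := Rle_abs x]; lra. Qed.

Lemma Rabs_mul_sub_le a b t t' : 0 <= a -> 0 <= t' <= 1 ->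
  Rabs (a * t - b * t') <= a * Rabs (t - t') + Rabs (a - b).
Proof.
move=> a0 t'01; have -> : a * t - b * t' = a * (t - t') + (a - b) * t' by ring.
apply: Rle_trans (Rabs_triang _ _) _.
rewrite !Rabs_mult (Rabs_pos_eq a) // (Rabs_pos_eq t'); last lra.
by have := Rabs_pos (a - b); nra.
Qed.

Lemma mul_div_succ_lt a e : 0 <= a -> 0 < e -> a * (e / (a + 1)) < e.
Proof.
move=> a0 e0; have -> : a * (e / (a + 1)) = e - e / (a + 1) by field; lra.
have : 0 < e / (a + 1) by apply: Rdiv_lt_0_compat; lra.
lra.
Qed.

Lemma lim_seqE u l : Un_cv u l -> lim_seq u = l.
Proof.
move=> ul; rewrite /lim_seq; case: excluded_middle_informative => [h|[]]; last by exists l.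
exact: UL_sequence (proj2_sig (constructive_indefinite_description _ h)) ul.
Qed.

Lemma Un_cv_ub u l c N : Un_cv u l -> (forall k, (N <= k)%N -> u k <= c) -> l <= c.
Proof.
move=> ul uc; apply: Rnot_lt_le => cl.
have [M hM] := ul (l - c) ltac:(lra).
have := hM (maxn N M) (elimT leP (leq_maxr N M)).
have := uc (maxn N M) (leq_maxl N M).
rewrite /Rdist => ? /Rabs_def2; lra.
Qed.

Lemma Un_cv_lb u l c N : Un_cv u l -> (forall k, (N <= k)%N -> c <= u k) -> c <= l.
Proof.
move=> ul uc; apply: Ropp_le_cancel; apply: (Un_cv_ub (opp_seq u) _ _ N).
  exact: CV_opp.
by move=> k /uc; rewrite /opp_seq; lra.
Qed.

Lemma bigmaxR_ge (T : finType) (P : pred T) (F : T -> R) i :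
  P i -> F i <= \big[Rmax/0]_(j | P j) F j.
Proof.
move=> Pi; have : i \in index_enum T by rewrite mem_index_enum.
elim: (index_enum T) => [//|a r IH]; rewrite in_cons big_cons => /orP [/eqP <- | ri].
  by rewrite Pi; apply: Rmax_l.
case: (P a); last exact: IH.
exact: Rle_trans (IH ri) (Rmax_r _ _).
Qed.

Lemma bigmaxR_ge0 (T : finType) (P : pred T) (F : T -> R) :
  0 <= \big[Rmax/0]_(j | P j) F j.
Proof. by elim/big_rec: _ => [|i x _ x0]; [lra | exact: Rle_trans x0 (Rmax_r _ _)]. Qed.

Lemma finite_pigeonhole (T : finType) (A : nat -> T -> Prop) :
  (forall D, exists2 d, (D <= d)%N & exists t, A d t) ->
  exists t, forall D, exists2 d, (D <= d)%N & A d t.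
Proof.
move=> often; apply: NNPP => none.
have rarely t : exists D, forall d, (D <= d)%N -> ~ A d t.
  apply: NNPP => h; apply: none; exists t => D; apply: NNPP => h'; apply: h.
  by exists D => d Dd Adt; apply: h'; exists d.
have [bound hbound] := choice _ rarely.
have [d hd [t Adt]] := often (\max_t bound t).
by apply: (hbound t d) Adt; apply: leq_trans hd; apply: leq_bigmax.
Qed.

Fixpoint psum (c : nat -> R) n := if n is k.+1 then psum c k + c k else 0.

Section SummableIncrements.
Variables (c : nat -> R) (l : R).
Hypotheses (c_ge0 : forall n, 0 <= c n) (c_sum : infinite_sum c l).

Lemma psum_cv : Un_cv (psum c) l.
Proof.
have psumE n : psum c n.+1 = sum_f_R0 c n by elim: n => [|n /= <-] /=; lra.
move=> eps eps0; have [N hN] := c_sum eps eps0; exists N.+1 => [[|n] /leP Nn] //.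
by rewrite psumE; apply: hN; apply/leP.
Qed.

Lemma psum_growing : Un_growing (psum c).
Proof. by move=> n /=; have := c_ge0 n; lra. Qed.

Lemma psum_le n : psum c n <= l.
Proof.
apply: (Un_cv_lb _ _ _ n psum_cv) => k /leP nk.
exact: Rge_le (growing_prop _ _ _ psum_growing nk).
Qed.

Section Increments.
Variable u : nat -> R.
Hypothesis u_step : forall n, Rabs (u n - u n.+1) <= c n.

Lemma increments_dist_le n m : (n <= m)%N -> Rabs (u n - u m) <= psum c m - psum c n.
Proof.
elim: m => [|m IH]; first by rewrite leqn0 => /eqP ->; rewrite Rminus_diag Rabs_R0; lra.
rewrite leq_eqVlt => /orP [/eqP -> | /IH nm]; first by rewrite Rminus_diag Rabs_R0; lra.
have := Rabs_triang (u n - u m) (u m - u m.+1); have := u_step m.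
by rewrite /= (_ : u n - u m + (u m - u m.+1) = u n - u m.+1); [lra | ring].
Qed.

Lemma increments_cv : Un_cv u (lim_seq u) /\
  forall n, Rabs (lim_seq u - u n) <= l - psum c n.
Proof.
have [v uv] : {v | Un_cv u v}.
  apply: R_complete => eps eps0.
  have [N hN] := CV_Cauchy _ (exist _ l psum_cv) eps eps0.
  exists N => n m Nn Nm; move: (hN n m Nn Nm); rewrite /Rdist.
  case/orP: (leq_total n m) => [nm | mn].
    by have := increments_dist_le n m nm; rewrite (Rabs_minus_sym (psum c n));
      have := Rle_abs (psum c m - psum c n); lra.
  by have := increments_dist_le m n mn; rewrite (Rabs_minus_sym (u n));
    have := Rle_abs (psum c n - psum c m); lra.
rewrite (lim_seqE u v uv); split => // n; apply: Rabs_le.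
have near k : (n <= k)%N -> Rabs (u k - u n) <= l - psum c n.
  by move=> nk; rewrite Rabs_minus_sym; have := increments_dist_le n k nk; have := psum_le k; lra.
have lb : u n - (l - psum c n) <= v.
  by apply: (Un_cv_lb _ _ _ n uv) => k /near /Rabs_le_inv; lra.
have ub : v <= u n + (l - psum c n).
  by apply: (Un_cv_ub _ _ _ n uv) => k /near /Rabs_le_inv; lra.
lra.
Qed.

End Increments.
End SummableIncrements.

Lemma lipschitz_nonneg {A B : Type} (dA : A -> A -> R) (dB : B -> B -> R) (f : A -> B) :
  (forall a a', 0 <= dA a a') -> lipschitz dA dB f ->
  exists K, 0 <= K /\ forall a a', dB (f a) (f a') <= K * dA a a'.
Proof.
move=> dA0 [K fK]; exists (Rabs K); split => [|a a']; first exact: Rabs_pos.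
apply: Rle_trans (fK a a') _; apply: Rmult_le_compat_r; [exact: dA0 | exact: Rle_abs].
Qed.

Section FSystem.
Variable Fs : FData.
Local Notation V := (Defs.V Fs).
Local Notation E := (Defs.E Fs).
Local Notation Psi := (Defs.Psi Fs).
Local Notation X := (Defs.X Fs).
Local Notation pt := (Defs.pt Fs).
Local Notation dX := (Defs.dX Fs).
Implicit Types x y : X.

Lemma X_eq x y : (forall n, pt x n = pt y n) -> x = y.
Proof.
case: x y => [x xP] [y yP]; rewrite /Defs.pt /= => xy.
have e : x = y by apply: functional_extensionality_dep.
by subst; f_equal; apply: proof_irrelevance.
Qed.

Lemma pt_Psi x n : pt x n = Psi n (pt x n.+1).
Proof. exact: (proj2_sig x n). Qed.

Lemma pt_eq_le x y m n : (m <= n)%N -> pt x n = pt y n -> pt x m = pt y m.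
Proof.
elim: n => [|n IH]; first by rewrite leqn0 => /eqP ->.
rewrite leq_eqVlt => /orP [/eqP -> // | /IH mn] xy.
by apply: mn; rewrite pt_Psi xy -pt_Psi.
Qed.
Arguments pt_eq_le {x y m n}.

Lemma dX_ge0 x y : 0 <= dX x y.
Proof. rewrite /dX; case: excluded_middle_informative => h; [apply: pow_le|]; lra. Qed.

Lemma dX_le_pt_eq x y n : pt x n = pt y n -> dX x y <= (/2)^n.+1.
Proof.
move=> xy; rewrite /dX; case: excluded_middle_informative => [h|_]; last by apply: pow_le; lra.
case: ex_minnP => m xym _; apply: pow_half_le; rewrite ltnNge; apply/negP => mn.
by move: xym; rewrite (pt_eq_le mn xy) eqxx.
Qed.

Lemma pt_eq_dX_lt x y n : dX x y < (/2)^n -> pt x n = pt y n.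
Proof.
move=> dxy; case: (eqVneq (pt x n) (pt y n)) => // xy; exfalso; move: dxy.
rewrite /dX; case: excluded_middle_informative => [h|[]]; last by exists n.
by case: ex_minnP => m _ /(_ n xy) /pow_half_le; lra.
Qed.
Arguments pt_eq_dX_lt {x y n}.

Lemma exists_thread (Q : forall n, V n -> Prop) : (exists v, Q 0%N v) ->
  (forall n v, Q n v -> exists v', Psi n v' = v /\ Q n.+1 v') ->
  exists x, forall n, Q n (pt x n).
Proof.
move=> Q0 Qup.
pose v0 := constructive_indefinite_description _ Q0.
pose next n (v : {v | Q n v}) :=
  constructive_indefinite_description _ (Qup n _ (proj2_sig v)).
pose fix path n : {v : V n | Q n v} :=
  match n return {v : V n | Q n v} with
  | 0%N => v0
  | k.+1 => exist _ (proj1_sig (next k (path k))) (proj2 (proj2_sig (next k (path k))))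
  end.
have path_Psi n : proj1_sig (path n) = Psi n (proj1_sig (path n.+1)).
  exact: esym (proj1 (proj2_sig (next n (path n)))).
by exists (exist _ (fun n => proj1_sig (path n)) path_Psi) => n; apply: (proj2_sig (path n)).
Qed.

(* The level [n + d], by recursion on [d] so that [down] below is structural. *)
Fixpoint above (n d : nat) : nat := if d is d'.+1 then above n.+1 d' else n.

Fixpoint down (n d : nat) : V (above n d) -> V n :=
  match d return V (above n d) -> V n with
  | 0%N => fun w => w
  | d'.+1 => fun w => Psi n (down n.+1 d' w)
  end.

Section Konig.
Variable P : forall n, V n -> Prop.
Hypothesis P_nonempty : forall n, exists v, P n v.
Hypothesis P_Psi : forall n v, P n.+1 v -> P n (Psi n v).

Lemma P_down d : forall n w, P (above n d) w -> P n (down n d w).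
Proof. by elim: d => [|d IH] n w //= /IH; apply: P_Psi. Qed.

Lemma konig : exists x, forall n, P n (pt x n).
Proof.
pose extendable n v := forall D, exists2 d, (D <= d)%N &
  exists w, down n d w = v /\ P (above n d) w.
have [x xQ] : exists x, forall n, extendable n (pt x n).
  apply: exists_thread.
    apply: finite_pigeonhole => D; exists D => //.
    by have [w Pw] := P_nonempty (above 0 D); exists (down 0 D w), w.
  move=> n v vQ.
  have [v' v'Q] : exists v', forall D, exists2 d, (D <= d)%N &
      Psi n v' = v /\ exists w, down n.+1 d w = v' /\ P (above n.+1 d) w.
    apply: finite_pigeonhole => D.
    have [[|d] // Dd [w [wv Pw]]] := vQ D.+1.
    by exists d => //; exists (down n.+1 d w); split => //; exists w.
  exists v'; split; first by have [d _ []] := v'Q 0%N.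
  by move=> D; have [d Dd [_ w]] := v'Q D; exists d.
by exists x => n; have [d _ [w [<- Pw]]] := xQ n 0%N; apply: P_down.
Qed.

End Konig.

Lemma cluster_point (u : nat -> X) :
  exists x, forall n D, exists2 d, (D <= d)%N & pt (u d) n = pt x n.
Proof.
pose often n v := forall D, exists2 d, (D <= d)%N & pt (u d) n = v.
have [x xP] : exists x, forall n, often n (pt x n).
  apply: konig => [n | n v vP D].
    by apply: finite_pigeonhole => D; exists D => //; exists (pt (u D) n).
  by have [d Dd <-] := vP D; exists d; rewrite // -pt_Psi.
by exists x.
Qed.

Hypothesis FS : is_FSystem Fs.

Lemma edge_out n (v : V n) : exists w, E n v w.
Proof. by have [out _] := FS; apply: out. Qed.

Lemma edge_in n (v : V n) : exists u, E n u v.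
Proof. by have [_ [inc _]] := FS; apply: inc. Qed.

Lemma edge_Psi n (u v : V n.+1) : E n.+1 u v -> E n (Psi n u) (Psi n v).
Proof. by have [_ [_ [_ [eP _]]]] := FS; apply: eP. Qed.

Lemma edge_target_unique m : exists d, forall g : V (Nat.add d m),
  exists! w : V m, exists g', E (Nat.add d m) g g' /\ proj Fs m d g' = w.
Proof. by have [_ [_ [_ [_ [_ [_ [/(_ m) [d [_ h]] _]]]]]]] := FS; exists d. Qed.

Lemma phi_bounds n (v : V n) :
  0 <= phiL Fs n v /\ phiL Fs n v <= phiU Fs n v /\ phiU Fs n v <= 1.
Proof. by have [_ [_ [_ [_ [_ [_ [_ [b _]]]]]]]] := FS; apply: b. Qed.

Lemma phiU_Psi n (v : V n.+1) : phiU Fs n.+1 v <= phiU Fs n (Psi n v).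
Proof. by have [_ [_ [_ [_ [_ [_ [_ [_ [U _]]]]]]]]] := FS; apply: U. Qed.

Lemma phiL_Psi n (v : V n.+1) : phiL Fs n (Psi n v) <= phiL Fs n.+1 v.
Proof. by have [_ [_ [_ [_ [_ [_ [_ [_ [_ [L _]]]]]]]]]] := FS; apply: L. Qed.

Local Notation HX := (Defs.HX Fs).

Lemma proj_pt x m d : proj Fs m d (pt x (Nat.add d m)) = pt x m.
Proof. by elim: d => [|d IH] //=; rewrite -pt_Psi. Qed.

Lemma HXrel_unique x y y' : HXrel Fs x y -> HXrel Fs x y' -> y = y'.
Proof.
move=> xy xy'; apply: X_eq => m; have [d uniq] := edge_target_unique m.
have [w [_ wE]] := uniq (pt x (Nat.add d m)).
rewrite -(wE (pt y m)); last by exists (pt y (Nat.add d m)); rewrite proj_pt.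
by rewrite -(wE (pt y' m)) //; exists (pt y' (Nat.add d m)); rewrite proj_pt.
Qed.

Lemma HXrel_HX x : HXrel Fs x (HX x).
Proof.
rewrite /Defs.HX; case: excluded_middle_informative => [h|[]].
  exact: proj2_sig (constructive_indefinite_description _ h).
apply: konig (fun n v => E n (pt x n) v) _ _ => [n | n v]; first exact: edge_out.
by rewrite [pt x n]pt_Psi; apply: edge_Psi.
Qed.

Lemma HX_pt_eq m : exists N, forall x y, pt x N = pt y N -> pt (HX x) m = pt (HX y) m.
Proof.
have [d uniq] := edge_target_unique m; exists (Nat.add d m) => x y xy.
have [w [_ wE]] := uniq (pt x (Nat.add d m)).
rewrite -(wE (pt (HX x) m)); last first.
  by exists (pt (HX x) (Nat.add d m)); rewrite proj_pt; split => //; apply: HXrel_HX.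
rewrite -(wE (pt (HX y) m)) // xy.
by exists (pt (HX y) (Nat.add d m)); rewrite proj_pt; split => //; apply: HXrel_HX.
Qed.

Lemma HX_dX_lt eps : 0 < eps -> exists N, forall x y, pt x N = pt y N -> dX (HX x) (HX y) < eps.
Proof.
move=> eps0; have [n n_eps] := pow_half_lt eps eps0; have [N HN] := HX_pt_eq n.
exists N => x y /HN /dX_le_pt_eq; have := pow_half_le (leqnSn n); lra.
Qed.

Lemma HX_surjective y : exists x, HX x = y.
Proof.
have [x xy] : exists x, HXrel Fs x y.
  apply: (konig (fun n v => E n v (pt y n))) => [n | n v]; first exact: edge_in.
  by rewrite [pt y n]pt_Psi; apply: edge_Psi.
by exists x; apply: HXrel_unique (HXrel_HX x) xy.
Qed.

Local Notation phiUX := (Defs.phiUX Fs).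
Local Notation phiLX := (Defs.phiLX Fs).

Definition phiU_at x n := phiU Fs n (pt x n).
Definition phiL_at x n := phiL Fs n (pt x n).

Lemma phiU_at_decreasing x : Un_decreasing (phiU_at x).
Proof. by move=> n; rewrite /phiU_at [pt x n]pt_Psi; apply: phiU_Psi. Qed.

Lemma phiL_at_growing x : Un_growing (phiL_at x).
Proof. by move=> n; rewrite /phiL_at [pt x n]pt_Psi; apply: phiL_Psi. Qed.

Lemma phiUX_cv x : Un_cv (phiU_at x) (phiUX x).
Proof.
have [l ul] : {l | Un_cv (phiU_at x) l}.
  apply: decreasing_cv; first exact: phiU_at_decreasing.
  by exists 0 => _ [n ->]; rewrite /opp_seq /phiU_at; have := phi_bounds _ (pt x n); lra.
by have -> : phiUX x = l := lim_seqE _ _ ul.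
Qed.

Lemma phiLX_cv x : Un_cv (phiL_at x) (phiLX x).
Proof.
have [l ul] : {l | Un_cv (phiL_at x) l}.
  apply: growing_cv; first exact: phiL_at_growing.
  by exists 1 => _ [n ->]; rewrite /phiL_at; have := phi_bounds _ (pt x n); lra.
by have -> : phiLX x = l := lim_seqE _ _ ul.
Qed.

Lemma phiUX_le_at x n : phiUX x <= phiU_at x n.
Proof.
apply: (Un_cv_ub _ _ _ n (phiUX_cv x)) => k /leP nk.
exact: decreasing_prop (phiU_at_decreasing x) nk.
Qed.

Lemma phiL_at_le x n : phiL_at x n <= phiLX x.
Proof.
apply: (Un_cv_lb _ _ _ n (phiLX_cv x)) => k /leP nk.
exact: Rge_le (growing_prop _ _ _ (phiL_at_growing x) nk).
Qed.

Lemma phiLX_le_phiUX x : phiLX x <= phiUX x.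
Proof.
apply: Rle_cv_lim (phiLX_cv x) (phiUX_cv x) => n.
by have := phi_bounds _ (pt x n); rewrite /phiL_at /phiU_at; lra.
Qed.

Lemma phiLX_ge0 x : 0 <= phiLX x.
Proof. by have := phiL_at_le x 0; have := phi_bounds _ (pt x 0); rewrite /phiL_at; lra. Qed.

Lemma phiUX_le1 x : phiUX x <= 1.
Proof. by have := phiUX_le_at x 0; have := phi_bounds _ (pt x 0); rewrite /phiU_at; lra. Qed.

Lemma phiLX_lsc x e : 0 < e -> exists N, forall y, pt x N = pt y N -> phiLX x <= phiLX y + e.
Proof.
move=> e0; have [N hN] := phiLX_cv x e e0; exists N => y xy.
have := phiL_at_le y N; have := hN N (le_n N); rewrite /phiL_at /Rdist xy => /Rabs_def2; lra.
Qed.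

Hypothesis phiU_pos : forall n (v : V n), 0 < phiU Fs n v.
Variable lG : R.
Hypothesis Gamma_sum : infinite_sum (Gamma Fs) lG.

Local Notation sX := (Defs.sX Fs).

Lemma Gamma_ge0 n : 0 <= Gamma Fs n.
Proof. exact: bigmaxR_ge0. Qed.

Lemma sn_lift_dist n (u v : V n) (u' v' : V n.+1) : E n u v -> E n.+1 u' v' ->
  Psi n u' = u -> Psi n v' = v ->
  Rabs (sn Fs n u v - sn Fs n.+1 u' v') <= Gamma Fs n /\
  Rabs (sn Fs n v u - sn Fs n.+1 v' u') <= Gamma Fs n.
Proof.
move=> uv u'v' u'u v'v.
have edge_le : Gamma_edge Fs n u v <= Gamma Fs n.
  exact: (bigmaxR_ge _ _ (fun p => Gamma_edge Fs n p.1 p.2) (u, v)).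
have lift_le := bigmaxR_ge _ (fun p : V n.+1 * V n.+1 =>
    [&& E n.+1 p.1 p.2, Psi n p.1 == u & Psi n p.2 == v])
  (fun p => Rmax (Rabs (sn Fs n v u - sn Fs n.+1 p.2 p.1))
                 (Rabs (sn Fs n u v - sn Fs n.+1 p.1 p.2))) (u', v').
move: lift_le; rewrite /= u'v' u'u v'v !eqxx => /(_ isT) lift_le.
by split; apply: Rle_trans edge_le; apply: Rle_trans lift_le; [apply: Rmax_r | apply: Rmax_l].
Qed.

Definition s_at x n := sn Fs n (pt x n) (pt (HX x) n).
Definition s_at_rev x n := sn Fs n (pt (HX x) n) (pt x n).

Lemma s_at_step x n : Rabs (s_at x n - s_at x n.+1) <= Gamma Fs n /\
  Rabs (s_at_rev x n - s_at_rev x n.+1) <= Gamma Fs n.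
Proof. by apply: sn_lift_dist; rewrite -?pt_Psi //; apply: HXrel_HX. Qed.

Lemma sX_cv x : Un_cv (s_at x) (sX x) /\
  forall n, Rabs (sX x - s_at x n) <= lG - psum (Gamma Fs) n.
Proof. exact: increments_cv Gamma_ge0 Gamma_sum (s_at x) (fun n => proj1 (s_at_step x n)). Qed.

Lemma sX_bounds : exists m M, [/\ 0 < m, 0 < M & forall x, m <= sX x <= M].
Proof.
pose M0 := \big[Rmax/0]_(p : V 0 * V 0) sn Fs 0 p.1 p.2.
pose K := M0 + lG + 1.
have lG0 : 0 <= lG by apply: (psum_le _ _ Gamma_ge0 Gamma_sum 0).
have sn0_le u v : sn Fs 0 u v + lG + 1 <= K.
  by have : sn Fs 0 u v <= M0 := bigmaxR_ge _ _ _ (u, v) isT; rewrite /K; lra.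
have drift u : (forall n, Rabs (u n - u n.+1) <= Gamma Fs n) -> forall n, u n <= u 0%N + lG.
  move=> u_step n; have := increments_dist_le _ u u_step 0 n isT.
  by have := psum_le _ _ Gamma_ge0 Gamma_sum n; rewrite Rabs_minus_sym => ? /Rabs_le_inv /=; lra.
have K1 : 1 <= K by have : 0 <= M0 := bigmaxR_ge0 _ _ _; rewrite /K; lra.
exists (/ K), K; split; [by apply: Rinv_0_lt_compat; lra | lra | move=> x].
have [sx_cv sx_near] := sX_cv x; split.
  (* s_at x n = 1 / s_at_rev x n, and s_at_rev x n drifts by at most lG from level 0 *)
  apply: (Un_cv_lb _ _ _ 0%N sx_cv) => n _.
  have [xn_pos Hxn_pos] := (phiU_pos _ (pt x n), phiU_pos _ (pt (HX x) n)).
  have -> : s_at x n = / s_at_rev x n by rewrite /s_at /s_at_rev /sn; field; lra.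
  apply: Rinv_le_contravar; first exact: Rdiv_lt_0_compat.
  have := drift _ (fun n => proj2 (s_at_step x n)) n; have := sn0_le (pt (HX x) 0) (pt x 0).
  by rewrite /s_at_rev; lra.
have := sx_near 0%N; have := sn0_le (pt x 0) (pt (HX x) 0).
by rewrite /s_at => ? /Rabs_le_inv /=; lra.
Qed.

Lemma sX_pos x : 0 < sX x.
Proof. by have [m [M [m0 _ /(_ x) mM]]] := sX_bounds; lra. Qed.

Lemma sX_pt_close e : 0 < e ->
  exists N, forall x y, pt x N = pt y N -> Rabs (sX x - sX y) < e.
Proof.
move=> e0; have [n tail] := psum_cv _ _ Gamma_sum (e / 2) ltac:(lra).
have {}tail : lG - psum (Gamma Fs) n < e / 2.
  by move: (tail n (le_n n)); rewrite /Rdist Rabs_minus_sym => /Rabs_def2; lra.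
have [N HN] := HX_pt_eq n; exists (maxn N n) => x y xy.
have s_at_xy : s_at x n = s_at y n.
  by rewrite /s_at (pt_eq_le (leq_maxr N n) xy) (HN x y (pt_eq_le (leq_maxl N n) xy)).
have := proj2 (sX_cv x) n; have := proj2 (sX_cv y) n; rewrite s_at_xy.
move=> /Rabs_le_inv ? /Rabs_le_inv ?; apply: Rabs_def1; lra.
Qed.

Lemma phiUX_HX x : phiUX (HX x) = sX x * phiUX x.
Proof.
apply: UL_sequence (phiUX_cv (HX x)) _.
apply: Un_cv_ext (CV_mult _ _ _ _ (proj1 (sX_cv x)) (phiUX_cv x)) => n.
have := phiU_pos _ (pt x n); rewrite /s_at /phiU_at /sn => ?; field; lra.
Qed.

Local Notation Fence := (Defs.Fence Fs).
Local Notation dF := (Defs.dF Fs).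
Local Notation dXR := (Defs.dXR Fs).

Lemma fence_eq (p q : Fence) : proj1_sig p = proj1_sig q -> p = q.
Proof. by case: p q => [p pP] [q qP] /= pq; apply: subset_eq_compat. Qed.

Lemma fence_t01 (p : Fence) : 0 <= (proj1_sig p).2 <= 1.
Proof. by case: p => [[x t] /= xt]; have := phiLX_ge0 x; have := phiUX_le1 x; lra. Qed.

Lemma sX_phiLX_lsc x e : 0 < e ->
  exists N, forall y, pt x N = pt y N -> sX x * phiLX x <= sX y * phiLX y + e.
Proof.
move=> e0; have s0 := sX_pos x.
have [N1 lsc] := phiLX_lsc x (e / 2 / (sX x + 1)) ltac:(apply: Rdiv_lt_0_compat; lra).
have [N2 sN] := sX_pt_close (e / 2) ltac:(lra).
exists (maxn N1 N2) => y xy.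
have L := lsc y (pt_eq_le (leq_maxl _ _) xy).
have /Rabs_def2 S := sN x y (pt_eq_le (leq_maxr _ _) xy).
have := mul_div_succ_lt (sX x) (e / 2) ltac:(lra) ltac:(lra).
have := phiLX_ge0 y; have := phiLX_le_phiUX y; have := phiUX_le1 y.
have : sX x * (phiLX x - phiLX y) <= sX x * (e / 2 / (sX x + 1)) by apply: Rmult_le_compat_l; lra.
nra.
Qed.

Hypothesis sciss : Scissorhand Fs.

Lemma graph_approx x t : phiLX x <= t <= phiUX x -> forall e, 0 < e ->
  exists y, dX x y < e /\ Rabs (t - phiUX y) < e.
Proof.
move=> xt e e0; have [dense _] := sciss.
by have [y /Rmax_Rlt xy] := dense (exist _ (x, t) xt) e e0; exists y.
Qed.

Lemma graph_approx_pt x t N e : phiLX x <= t <= phiUX x -> 0 < e ->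
  exists y, pt x N = pt y N /\ Rabs (t - phiUX y) < e.
Proof.
move=> xt e0; have [y [xy ty]] := graph_approx x t xt _ (Rmin_glb_lt _ _ _ (pow_half_pos N) e0).
exists y; split; last exact: Rlt_le_trans ty (Rmin_r _ _).
by apply: pt_eq_dX_lt; apply: Rlt_le_trans xy (Rmin_l _ _).
Qed.

Lemma phiLX_HX_le x : phiLX (HX x) <= sX x * phiLX x.
Proof.
apply: (le_of_le_add_mul _ _ (sX x + 3)); first by have := sX_pos x; lra.
move=> e e0 e1.
have [N1 lsc] := phiLX_lsc (HX x) e e0.
have [N2 HN] := HX_pt_eq N1.
have [N3 sN] := sX_pt_close e e0.
have [y [xy ty]] := graph_approx_pt x (phiLX x) (maxn N2 N3) e
  (conj (Rle_refl _) (phiLX_le_phiUX x)) e0.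
have L := lsc (HX y) (HN x y (pt_eq_le (leq_maxl _ _) xy)).
have U := phiLX_le_phiUX (HX y); rewrite phiUX_HX in U.
have /Rabs_def2 S := sN x y (pt_eq_le (leq_maxr _ _) xy).
move/Rabs_def2: ty => ty.
have : sX y * phiUX y <= (sX x + e) * (phiLX x + e).
  have := sX_pos y; have := phiLX_ge0 y; have := phiLX_le_phiUX y => *.
  by apply: Rmult_le_compat; lra.
have := phiLX_ge0 x; have := phiLX_le_phiUX x; have := phiUX_le1 x; have := sX_pos x.
nra.
Qed.

Lemma T_in_fence x t : phiLX x <= t <= phiUX x -> phiLX (HX x) <= sX x * t <= phiUX (HX x).
Proof.
move=> xt; have s0 := sX_pos x; rewrite phiUX_HX; split.
  by apply: Rle_trans (phiLX_HX_le x) _; apply: Rmult_le_compat_l; lra.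
by apply: Rmult_le_compat_l; lra.
Qed.

Definition T (p : Fence) : Fence :=
  exist _ (HX (proj1_sig p).1, sX (proj1_sig p).1 * (proj1_sig p).2)
    (T_in_fence _ _ (proj2_sig p)).

Lemma T_graph (p : Fence) : (proj1_sig p).2 = phiUX (proj1_sig p).1 ->
  proj1_sig (T p) = (HX (proj1_sig p).1, phiUX (HX (proj1_sig p).1)).
Proof. by move=> pU; rewrite /= pU phiUX_HX. Qed.

Lemma T_continuous : mcontinuous dF dF T.
Proof.
move=> [[x t] xt] eps eps0.
have [N1 HN] := HX_dX_lt eps eps0.
have [N2 sN] := sX_pt_close (eps / 2) ltac:(lra).
have s0 := sX_pos x.
have dt0 : 0 < eps / 2 / (sX x + 1) by apply: Rdiv_lt_0_compat; lra.
exists (Rmin ((/2)^(maxn N1 N2)) (eps / 2 / (sX x + 1))).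
split; first by apply: Rmin_glb_lt => //; apply: pow_half_pos.
move=> [[y t'] yt']; rewrite /dF /dXR /= => /Rmax_Rlt [xy tt'].
have {}xy := pt_eq_dX_lt (Rlt_le_trans _ _ _ xy (Rmin_l _ _)).
have {}tt' := Rlt_le_trans _ _ _ tt' (Rmin_r _ _).
apply: Rmax_lub_lt; first exact: HN (pt_eq_le (leq_maxl _ _) xy).
have := sN x y (pt_eq_le (leq_maxr _ _) xy).
have := Rabs_mul_sub_le (sX x) (sX y) t t' ltac:(lra) (fence_t01 (exist _ (y, t') yt')).
have := mul_div_succ_lt (sX x) (eps / 2) ltac:(lra) ltac:(lra).
have : sX x * Rabs (t - t') <= sX x * (eps / 2 / (sX x + 1)) by apply: Rmult_le_compat_l; lra.
lra.
Qed.

Lemma HX_preimage_below y t : phiLX y <= t <= phiUX y ->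
  exists x, HX x = y /\ sX x * phiLX x <= t.
Proof.
move=> yt.
have approx n : exists x, dX y (HX x) < (/2)^n /\ phiUX (HX x) < t + (/2)^n.
  have [y' [yy' /Rabs_def2 ty']] := graph_approx y t yt _ (pow_half_pos n).
  by have [x xy'] := HX_surjective y'; exists x; rewrite xy'; split => //; lra.
have [u uP] := choice _ approx.
have [x xP] := cluster_point u.
exists x; split.
  apply: X_eq => k; have [N HN] := HX_pt_eq k; have [d kd uxd] := xP N k.
  rewrite -(HN _ _ uxd); apply: esym; apply: pt_eq_dX_lt.
  exact: Rlt_le_trans (proj1 (uP d)) (pow_half_le kd).
apply: Rle_plus_epsilon => e e0.
have [N lsc] := sX_phiLX_lsc x (e / 2) ltac:(lra).
have [n ne] := pow_half_lt (e / 2) ltac:(lra).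
have [d nd uxd] := xP N n.
have := lsc (u d) (esym uxd); have := pow_half_le nd; have := proj2 (uP d).
have := phiLX_le_phiUX (u d); have := sX_pos (u d); rewrite phiUX_HX.
nra.
Qed.

Lemma T_surjective q : exists p, T p = q.
Proof.
case: q => [[y t] /= yt]; have [x [xy lower]] := HX_preimage_below y t yt.
have s0 := sX_pos x.
have st : sX x * (t / sX x) = t by field; lra.
have upper : t <= sX x * phiUX x by rewrite -phiUX_HX xy; lra.
have xt : phiLX x <= t / sX x <= phiUX x.
  by split; apply: (Rmult_le_reg_l (sX x)); rewrite ?st; lra.
by exists (exist _ (x, t / sX x) xt); apply: fence_eq; rewrite /= xy; f_equal; field; lra.
Qed.

Lemma T_unique T' : mcontinuous dF dF T' ->
  (forall p, (proj1_sig (T' p)).1 = HX (proj1_sig p).1) ->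
  (forall p, (proj1_sig p).2 = phiUX (proj1_sig p).1 ->
     proj1_sig (T' p) = (HX (proj1_sig p).1, phiUX (HX (proj1_sig p).1))) ->
  forall p, T' p = T p.
Proof.
move=> T'c T'1 T'graph p; apply: fence_eq; apply: injective_projections; first exact: T'1.
apply: cond_eq => e e0.
have [d1 [d10 T'd]] := T'c p (e / 2) ltac:(lra).
have [d2 [d20 Td]] := T_continuous p (e / 2) ltac:(lra).
have [dense _] := sciss.
have [x px] := dense p _ (Rmin_glb_lt _ _ _ d10 d20).
pose gx := exist (fun p : X * R => phiLX p.1 <= p.2 <= phiUX p.1) (x, phiUX x)
  (conj (phiLX_le_phiUX x) (Rle_refl _)).
have /Rmax_Rlt [_ a] := T'd gx (Rlt_le_trans _ _ _ px (Rmin_l d1 d2)).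
have /Rmax_Rlt [_ b] := Td gx (Rlt_le_trans _ _ _ px (Rmin_r d1 d2)).
move: a b; rewrite (T'graph gx erefl) (T_graph gx erefl) /=.
by move=> /Rabs_def2 [? ?] /Rabs_def2 [? ?]; apply: Rabs_def1; lra.
Qed.

Section Inverse.
Variable g : X -> X.
Hypotheses (g_HX : forall x, g (HX x) = x) (HX_g : forall y, HX (g y) = y).
Hypothesis g_continuous : mcontinuous dX dX g.

Lemma phiLX_HX_ge x : sX x * phiLX x <= phiLX (HX x).
Proof.
apply: Rle_plus_epsilon => e e0.
have [N lsc] := sX_phiLX_lsc x (e / 2) ltac:(lra).
have [d [d0 gd]] := g_continuous (HX x) _ (pow_half_pos N).
have [y [xy /Rabs_def2 [_ ty]]] := graph_approx (HX x) (phiLX (HX x))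
  (conj (Rle_refl _) (phiLX_le_phiUX _)) _ (Rmin_glb_lt d (e / 2) 0 d0 ltac:(lra)).
have := gd y (Rlt_le_trans _ _ _ xy (Rmin_l _ _)); rewrite g_HX => /pt_eq_dX_lt /lsc.
have := phiLX_le_phiUX (g y); have := sX_pos (g y).
have := Rmin_r d (e / 2); rewrite -[in phiUX y](HX_g y) phiUX_HX in ty.
nra.
Qed.

Lemma T_inv_in_fence y t : phiLX y <= t <= phiUX y ->
  phiLX (g y) <= t / sX (g y) <= phiUX (g y).
Proof.
move=> yt; have s0 := sX_pos (g y).
have st : sX (g y) * (t / sX (g y)) = t by field; lra.
have := phiLX_HX_ge (g y); have := phiUX_HX (g y); rewrite HX_g => U L.
by split; apply: (Rmult_le_reg_l (sX (g y))); rewrite ?st; lra.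
Qed.

Definition T_inv (q : Fence) : Fence :=
  exist _ (g (proj1_sig q).1, (proj1_sig q).2 / sX (g (proj1_sig q).1))
    (T_inv_in_fence _ _ (proj2_sig q)).

Lemma T_inv_continuous : mcontinuous dF dF T_inv.
Proof.
move=> [[y t] yt] eps eps0; rewrite /T_inv /=.
set a := sX (g y); have a0 : 0 < a := sX_pos (g y).
have eta0 : 0 < Rmin (a / 2) (eps * a * a / 4).
  by apply: Rmin_glb_lt; [lra | have := Rmult_lt_0_compat _ _ eps0 a0; nra].
have [N sN] := sX_pt_close _ eta0.
have [d1 [d10 gd1]] := g_continuous y eps eps0.
have [d2 [d20 gd2]] := g_continuous y _ (pow_half_pos N).
have ea0 : 0 < eps * a / 2 by have := Rmult_lt_0_compat _ _ eps0 a0; lra.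
exists (Rmin (Rmin d1 d2) (eps * a / 2)).
split; first by apply: Rmin_glb_lt => //; apply: Rmin_glb_lt.
move=> [[y' t'] y't']; rewrite /dF /dXR /= => /Rmax_Rlt [yy' tt'].
have {}tt' := Rlt_le_trans _ _ _ tt' (Rmin_r _ _).
have {}yy' := Rlt_le_trans _ _ _ yy' (Rmin_l _ _).
apply: Rmax_lub_lt; first exact: gd1 (Rlt_le_trans _ _ _ yy' (Rmin_l _ _)).
apply: Rabs_div_sub_lt => //; last exact: fence_t01 (exist _ (y', t') y't').
exact: sN (pt_eq_dX_lt (gd2 y' (Rlt_le_trans _ _ _ yy' (Rmin_r _ _)))).
Qed.

Lemma T_invK p : T_inv (T p) = p.
Proof.
case: p => [[x t] xt]; apply: fence_eq; rewrite /= g_HX; f_equal.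
by have := sX_pos x => ?; field; lra.
Qed.

Lemma T_K q : T (T_inv q) = q.
Proof.
case: q => [[y t] yt]; apply: fence_eq; rewrite /= HX_g; f_equal.
by have := sX_pos (g y) => ?; field; lra.
Qed.

End Inverse.

Lemma T_homeomorphism : homeomorphism dX HX -> homeomorphism dF T.
Proof.
move=> [_ [g [g_HX HX_g g_cont]]]; split; first exact: T_continuous.
by exists (T_inv g g_HX HX_g g_cont); split; [exact: T_invK | exact: T_K | exact: T_inv_continuous].
Qed.

Lemma dXR_ge0 p q : 0 <= dXR p q.
Proof. exact: Rle_trans (dX_ge0 _ _) (Rmax_l _ _). Qed.

Lemma dXR_scale_le x y x' y' a b t t' KH Ka M :
  0 <= KH -> 0 <= Ka -> 0 <= b <= M -> 0 <= t <= 1 ->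
  dX x' y' <= KH * dX x y -> Rabs (a - b) <= Ka * dX x y ->
  dXR (x', a * t) (y', b * t') <= (KH + Ka + M) * dXR (x, t) (y, t').
Proof.
move=> KH0 Ka0 bM t01 x'y' ab.
have D0 := dXR_ge0 (x, t) (y, t'); rewrite /dXR /= in D0 *.
set D := Rmax _ _ in D0 *.
have xyD : dX x y <= D := Rmax_l _ _.
have tD : Rabs (t - t') <= D := Rmax_r _ _.
have KHD : KH * dX x y <= KH * D by apply: Rmult_le_compat_l.
have KaD : Ka * dX x y <= Ka * D by apply: Rmult_le_compat_l.
have MD : b * Rabs (t' - t) <= M * D.
  by rewrite Rabs_minus_sym; apply: Rmult_le_compat; try lra; apply: Rabs_pos.
have : 0 <= KH * D by apply: Rmult_le_pos; lra.
have : 0 <= M * D by apply: Rmult_le_pos; lra.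
have : 0 <= Ka * D by apply: Rmult_le_pos; lra.
have := Rabs_mul_sub_le b a t' t (proj1 bM) t01; rewrite Rabs_minus_sym (Rabs_minus_sym b).
by move=> *; apply: Rmax_lub; lra.
Qed.

Lemma T_lipschitz : lipschitz dX dR sX -> lipschitz dX dX HX -> lipschitz dF dF T.
Proof.
move=> /(lipschitz_nonneg _ _ _ dX_ge0) [Ks [Ks0 sK]].
move=> /(lipschitz_nonneg _ _ _ dX_ge0) [KH [KH0 HK]].
have [m [M [m0 M0 sM]]] := sX_bounds.
exists (KH + Ks + M) => [[[x t] xt] [[y t'] yt']]; rewrite /dF /=.
apply: dXR_scale_le => //; [by have [] := sM y; lra | | exact: sK].
exact: fence_t01 (exist _ (x, t) xt).
Qed.

Lemma T_bilipschitz : lipschitz dX dR sX -> lipschitz dX dR (fun x => / sX x) ->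
  bilipschitz dX dX HX -> bilipschitz dF dF T.
Proof.
move=> /(lipschitz_nonneg _ _ _ dX_ge0) [Ks [Ks0 sK]].
move=> /(lipschitz_nonneg _ _ _ dX_ge0) [Ki [Ki0 iK]] [KH [KH0 HK]].
have [m [M [m0 M0 sM]]] := sX_bounds.
have im0 : 0 < / m by apply: Rinv_0_lt_compat.
have KiKH0 : 0 <= Ki * KH by apply: Rmult_le_pos; lra.
exists (KH + Ks + M + (KH + Ki * KH + / m)); split => [|[[x t] xt] [[y t'] yt']].
  by have : 0 <= Ks + M + (KH + Ki * KH + / m); lra.
rewrite /dF /=.
have [sx0 sy0] := (sX_pos x, sX_pos y).
have := dXR_ge0 (x, t) (y, t'); have := dXR_ge0 (HX x, sX x * t) (HX y, sX y * t').
set D := dXR (x, t) _; set D' := dXR (HX x, _) _ => D'0 D0.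
have upper : D' <= (KH + Ks + M) * D.
  apply: dXR_scale_le; try lra; first by have [] := sM y; lra.
  - exact: fence_t01 (exist _ (x, t) xt).
  - by case: (HK x y).
  - exact: sK.
have lower : D <= (KH + Ki * KH + / m) * D'.
  have tE z s : s = / sX z * (sX z * s) by have := sX_pos z => ?; field; lra.
  (* the inverse of T has the same shape: t = s(x)^-1 (s(x) t) *)
  rewrite /D {1}(tE x t) {1}(tE y t').
  apply: dXR_scale_le; try lra.
  - split; first by apply: Rlt_le; apply: Rinv_0_lt_compat.
    by apply: Rinv_le_contravar => //; have [] := sM y.
  - exact: fence_t01 (T (exist _ (x, t) xt)).
  - by case: (HK x y).
  - apply: Rle_trans (iK x y) _; rewrite Rmult_assoc; apply: Rmult_le_compat_l => //.
    by case: (HK x y).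
have : 0 <= (Ks + M + (KH + Ki * KH + / m)) * D by apply: Rmult_le_pos; lra.
have : 0 <= (KH + Ks + M) * D' by apply: Rmult_le_pos; lra.
nra.
Qed.

Lemma T_isometry : (forall x, sX x = 1) -> isometry dX dX HX -> isometry dF dF T.
Proof. by move=> s1 HXiso [[x t] xt] [[y t'] yt']; rewrite /dF /dXR /= !s1 HXiso !Rmult_1_l. Qed.

End FSystem.

Theorem theorem5p4 (Fs : FData) :
  is_FSystem Fs ->
  (forall n (v : V Fs n), 0 < phiU Fs n v) ->
  condition_Gamma Fs ->
  Scissorhand Fs ->
  exists T : Fence Fs -> Fence Fs,
    (* T is a continuous surjection *)
    mcontinuous (dF Fs) (dF Fs) T /\
    (forall q, exists p, T p = q) /\
    (* H_X is a factor: pi o T = H_X o pi *)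
    (forall p, (proj1_sig (T p)).1 = HX Fs (proj1_sig p).1) /\
    (* T(x, phi^U(x)) = (H_X(x), phi^U(H_X(x))) *)
    (forall p, (proj1_sig p).2 = phiUX Fs (proj1_sig p).1 ->
       proj1_sig (T p) = (HX Fs (proj1_sig p).1, phiUX Fs (HX Fs (proj1_sig p).1))) /\
    (* uniqueness *)
    (forall T' : Fence Fs -> Fence Fs,
       mcontinuous (dF Fs) (dF Fs) T' ->
       (forall q, exists p, T' p = q) ->
       (forall p, (proj1_sig (T' p)).1 = HX Fs (proj1_sig p).1) ->
       (forall p, (proj1_sig p).2 = phiUX Fs (proj1_sig p).1 ->
          proj1_sig (T' p) = (HX Fs (proj1_sig p).1, phiUX Fs (HX Fs (proj1_sig p).1))) ->
       forall p, T' p = T p) /\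
    (* (1) *)
    (homeomorphism (dX Fs) (HX Fs) -> homeomorphism (dF Fs) T) /\
    (* (2) *)
    (lipschitz (dX Fs) dR (sX Fs) -> lipschitz (dX Fs) (dX Fs) (HX Fs) ->
       lipschitz (dF Fs) (dF Fs) T) /\
    (* (3) *)
    (lipschitz (dX Fs) dR (sX Fs) -> lipschitz (dX Fs) dR (fun x => / sX Fs x) ->
       bilipschitz (dX Fs) (dX Fs) (HX Fs) ->
       bilipschitz (dF Fs) (dF Fs) T) /\
    (* (4) *)
    ((forall x, sX Fs x = 1) -> isometry (dX Fs) (dX Fs) (HX Fs) ->
       isometry (dF Fs) (dF Fs) T).
Proof.
move=> FS phiU_pos [lG [Gamma_sum _]] sciss.
exists (T Fs FS phiU_pos lG Gamma_sum sciss).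
split; first exact: T_continuous.
split; first exact: T_surjective.
split; first by [].
split; first exact: T_graph.
split; first by move=> T' T'c _; apply: T_unique.
split; first exact: T_homeomorphism.
split; first exact: T_lipschitz.
split; first exact: T_bilipschitz.
exact: T_isometry.
Qed.
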